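(* Let $n>1$ be an integer and let $p>q$ be primes neither of which divides $n$. Then $G(pn)<G(qn)$.
   Context: For a positive integer $n$, $\sigma(n)=\sum_{d\mid n} d$. For integers $n>1$ define $G(n)=\dfrac{\sigma(n)}{n\log\log n}$ (natural logarithms). *)

From mathcomp Require Import all_boot.
From Stdlib Require Import Reals.

Definition sigma (n : nat) : nat := \sum_(d <- divisors n) d.

Definition G (n : nat) : R :=
  Rdiv (INR (sigma n)) (Rmult (INR n) (ln (ln (INR n)))).

(* Since p and q do not divide n, sigma is multiplicative across the factor:
   sigma(p n) = (p + 1) sigma(n), and likewise for q.  Hence
     G(p n) = (1 + 1/p) * sigma(n) / (n * ln ln (p n)),
     G(q n) = (1 + 1/q) * sigma(n) / (n * ln ln (q n)).
   For q < p the factor 1 + 1/p is smaller than 1 + 1/q, and since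
   q n < p n with q n >= 4 > e, the denominator ln ln (p n) exceeds the
   positive ln ln (q n).  Both effects push G(p n) below G(q n). *)
From Pilot Require Import Defs.
From mathcomp Require Import all_boot.
From Stdlib Require Import Reals Lra Psatz.

Lemma divisors_mul_prime (n p : nat) : (0 < n)%N -> prime p -> ~~ (p %| n) ->
  perm_eq (divisors (p * n)) (divisors n ++ map (muln p) (divisors n)).
Proof.
move=> n_gt0 p_pr p_ndvd_n.
have p_gt0 : (0 < p)%N by exact: prime_gt0.
have pn_gt0 : (0 < p * n)%N by rewrite muln_gt0 p_gt0.
apply: uniq_perm; first exact: divisors_uniq.
- rewrite cat_uniq divisors_uniq map_inj_uniq ?divisors_uniq; last first.
    by move=> a b /eqP; rewrite eqn_pmul2l // => /eqP.
  rewrite andbT /=; apply/hasP => -[_ /mapP [d _ ->]].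
  rewrite -dvdn_divisors // => pd_dvd_n; apply/negP: p_ndvd_n; rewrite negbK.
  exact: dvdn_trans (dvdn_mulr _ _) pd_dvd_n.
move=> d; rewrite mem_cat -!dvdn_divisors //; apply/idP/idP.
- move=> d_dvd_pn; case: (boolP (p %| d)) => [/dvdnP [d' d_eq] | p_ndvd_d].
    rewrite d_eq in d_dvd_pn *; apply/orP; right; apply/mapP.
    exists d'; last by rewrite mulnC.
    by rewrite -dvdn_divisors // -(dvdn_pmul2l p_gt0) mulnC.
  have cop : coprime d p by rewrite coprime_sym prime_coprime.
  by apply/orP; left; rewrite -(Gauss_dvdl n cop) mulnC.
- case/orP => [d_dvd_n | /mapP [d' d'_div ->]]; first exact: dvdn_mull.
  by rewrite dvdn_pmul2l // dvdn_divisors.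
Qed.

Lemma sigma_mul_prime (n p : nat) : (0 < n)%N -> prime p -> ~~ (p %| n) ->
  Defs.sigma (p * n) = ((p + 1) * Defs.sigma n)%N.
Proof.
move=> n_gt0 p_pr p_ndvd_n.
rewrite /Defs.sigma (perm_big _ (divisors_mul_prime n p n_gt0 p_pr p_ndvd_n)).
by rewrite big_cat /= big_map -big_distrr /= mulnDl mul1n addnC.
Qed.

(* n itself is a divisor of n, so sigma n >= n > 0. *)
Lemma sigma_gt0 (n : nat) : (0 < n)%N -> (0 < Defs.sigma n)%N.
Proof.
by move=> n_gt0; rewrite /Defs.sigma (big_rem n) ?divisors_id //= ltn_addr.
Qed.

Section RealInequalities.
Local Open Scope R_scope.

Lemma lnln_pos (x : R) : exp 1 < x -> 0 < ln (ln x).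
Proof.
move=> ex; rewrite -ln_1; apply: ln_increasing; first lra.
rewrite -(ln_exp 1); apply: ln_increasing => //; exact: exp_pos.
Qed.

Lemma lnln_increasing (x y : R) : 1 < x -> x < y -> ln (ln x) < ln (ln y).
Proof.
move=> x_gt1 xy; apply: ln_increasing; last by apply: ln_increasing; lra.
by rewrite -ln_1; apply: ln_increasing; lra.
Qed.

Lemma quotient_decreasing (P Q N s L1 L2 : R) :
  0 < s -> 0 < N -> 0 < Q -> Q < P -> 0 < L2 -> L2 < L1 ->
  (P + 1) * s / (P * N * L1) < (Q + 1) * s / (Q * N * L2).
Proof.
move=> s_gt0 N_gt0 Q_gt0 QP L2_gt0 L21.
have factor_lt : (P + 1) / P < (Q + 1) / Q.
  apply: (Rmult_lt_reg_r (P * Q)); first nra.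
  have -> : (P + 1) / P * (P * Q) = (P + 1) * Q by field; lra.
  have -> : (Q + 1) / Q * (P * Q) = (Q + 1) * P by field; lra.
  lra.
have inv_lt : / L1 < / L2 by apply: Rinv_lt_contravar; nra.
have -> : (P + 1) * s / (P * N * L1) = (P + 1) / P * / L1 * (s / N)
  by field; repeat split; lra.
have -> : (Q + 1) * s / (Q * N * L2) = (Q + 1) / Q * / L2 * (s / N)
  by field; repeat split; lra.
apply: Rmult_lt_compat_r; first exact: Rdiv_lt_0_compat.
apply: Rmult_le_0_lt_compat => //.
- by apply: Rlt_le; apply: Rdiv_lt_0_compat; lra.
- by apply: Rlt_le; apply: Rinv_0_lt_compat; lra.
Qed.

End RealInequalities.

Theorem mainTheorem10 (n p q : nat) :
  (1 < n)%N -> prime p -> prime q -> (q < p)%N ->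
  ~~ (p %| n) -> ~~ (q %| n) ->
  Rlt (G (p * n)) (G (q * n)).
Proof.
move=> n_gt1 p_pr q_pr qp p_ndvd_n q_ndvd_n.
have n_gt0 : (0 < n)%N by exact: ltnW.
rewrite /G !sigma_mul_prime // !mult_INR !plus_INR.
have qn_ge4 : (4 <= INR (q * n))%R.
  replace 4%R with (INR 4) by (simpl; lra).
  by apply/le_INR/leP; exact: (leq_mul (prime_gt1 q_pr) n_gt1).
have qn_lt_pn : (INR (q * n) < INR (p * n))%R by apply/lt_INR/ltP; rewrite ltn_pmul2r.
have e_le3 := exp_le_3.
rewrite !mult_INR in qn_ge4 qn_lt_pn.
apply: quotient_decreasing.
- by apply/lt_0_INR/ltP/sigma_gt0.
- by apply/lt_0_INR/ltP.
- by apply/lt_0_INR/ltP/prime_gt0.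
- exact/lt_INR/ltP.
- by apply: lnln_pos; lra.
- by apply: lnln_increasing; lra.
Qed.
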